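(* For every integer $t\ge 2$, every convex polygon whose vertices are points of $S_t$ has at most $t-1$ vertices.
   Context: For integers $r\ge 1$ let $\delta_r:=3\cdot 4^{r-1}$ and $\delta_r':=(3r+1)\cdot 4^{r-1}$. For positive integers $k,l$ define $S_{k,l}\subset\mathbb{Z}^2$ recursively: $S_{k,l}:=\{(0,0)\}$ if $k\le 2$ or $l\le 2$; otherwise $S_{k,l}:=S_{k-1,l}\cup\{(x+\delta_{k+l-1},\,y+\delta_{k+l-1}'):(x,y)\in S_{k,l-1}\}$. Let $t\ge 2$ be an integer. For $0\le i\le t-3$ define $v_i:=(3(t-i),-3i)$, and let $w_0:=(0,0)$, $w_{i+1}:=w_i+v_i$ for $i=0,\dots,t-3$. For $i=0,\dots,t-2$ let $q_i:=(t+1)4^{t+1}w_i$. Define $S_t:=\bigcup_{i=0}^{t-2}\{p+q_i: p\in S_{t-i,i+2}\}$. *)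

From mathcomp Require Import all_boot all_order all_algebra.
Set Implicit Arguments. Unset Strict Implicit. Unset Printing Implicit Defensive.
Import Order.TTheory GRing.Theory Num.Theory.

Definition point := (int * int)%type.

Definition delta (r : nat) : int := (3 * 4 ^ (r - 1))%N.
Definition delta' (r : nat) : int := ((3 * r + 1) * 4 ^ (r - 1))%N.

Definition shift_pt (a : point) (p : point) : point :=
  ((p.1 + a.1)%R, (p.2 + a.2)%R).

Fixpoint Skl (k : nat) : nat -> seq point :=
  match k with
  | 0 => fun _ => [:: (0%R, 0%R)]
  | k'.+1 =>
    fix Sl (l : nat) : seq point :=
      match l with
      | 0 => [:: (0%R, 0%R)]
      | l'.+1 =>
        if (k'.+1 <= 2) || (l'.+1 <= 2) then [:: (0%R, 0%R)]
        else Skl k' l'.+1 ++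
             map (shift_pt (delta (k'.+1 + l'.+1 - 1),
                            delta' (k'.+1 + l'.+1 - 1))) (Sl l')
      end
  end.

Definition w (t i : nat) : point :=
  ((\sum_(j < i) (3 * (t - j))%N%:Z)%R, (- (\sum_(j < i) (3 * j)%N%:Z))%R).

Definition q (t i : nat) : point :=
  let c : int := ((t + 1) * 4 ^ (t + 1))%N in ((c * (w t i).1)%R, (c * (w t i).2)%R).

Definition St (t : nat) : seq point :=
  flatten [seq map (shift_pt (q t i)) (Skl (t - i) (i + 2)) | i <- iota 0 (t - 1)].

Local Open Scope ring_scope.

Definition in_conv_hull (p : point) (Y : seq point) : Prop :=
  exists c : nat -> rat,
    (forall i, (i < size Y)%N -> 0 <= c i) /\
    \sum_(i < size Y) c i = 1 /\
    \sum_(i < size Y) c i * ((nth p Y i).1)%:~R = (p.1)%:~R /\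
    \sum_(i < size Y) c i * ((nth p Y i).2)%:~R = (p.2)%:~R.

(* P (duplicate-free) is the vertex set of a convex polygon: no point of P
   lies in the convex hull of the other points of P. *)
Definition convex_position (P : seq point) : Prop :=
  uniq P /\ forall p, p \in P -> ~ in_conv_hull p (rem p P).

(* S_t is the union of the blocks B_i = S_{t-i,i+2} + q_i, 0 <= i <= t-2.  By the
   Erdos-Szekeres recursion, S_{k,l} contains no cup with k and no cap with l
   points.  All slopes inside a block lie above 1, the blocks sit far apart
   along a concave chain of anchors, and every slope from a block to a later
   one lies below 1.  Cut a convex polygon P along the chord from its leftmost
   vertex L to its rightmost vertex R: the part on or above the chord is a cap,
   the part on or below it is a cup, and both contain L and R.  The cap has at
   most i_L + 1 points in the block i_L of L and at most one in each later
   block up to the block i_R of R; the cup has at most t - i_R - 1 points in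
   B_{i_R} and no point outside it other than L.  Hence
   |P| + 2 <= (i_R + 1) + (t - i_R). *)

From mathcomp Require Import all_boot all_order all_algebra.
From mathcomp Require Import zify ring lra.
Set Implicit Arguments.
Unset Strict Implicit.
Unset Printing Implicit Defensive.
Import Order.TTheory GRing.Theory Num.Theory.
Local Open Scope ring_scope.

Lemma sum_weights_uniq (R : nzRingType) (T : eqType) (Y : seq T) (ws : seq (T * R))
    (f : T -> R) :
  uniq Y -> {subset map fst ws <= Y} ->
  \sum_(x <- Y) (\sum_(k <- ws | x == k.1) k.2) * f x = \sum_(k <- ws) k.2 * f k.1.
Proof.
move=> uY wsY; under eq_bigr => x _ do rewrite mulr_suml.
rewrite (exchange_big_dep predT) //=; apply: eq_big_seq => k kws.
rewrite -big_filter filter_pred1_uniq ?big_seq1 //.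
by apply: wsY; apply: map_f.
Qed.

Lemma in_conv_hull_int_comb (p : point) (Y : seq point) (ws : seq (point * int)) :
  uniq Y -> {subset map fst ws <= Y} -> {in ws, forall k, 0 <= k.2} ->
  0 < \sum_(k <- ws) k.2 ->
  \sum_(k <- ws) k.2 * k.1.1 = (\sum_(k <- ws) k.2) * p.1 ->
  \sum_(k <- ws) k.2 * k.1.2 = (\sum_(k <- ws) k.2) * p.2 ->
  in_conv_hull p Y.
Proof.
move=> uY wsY ws_ge0; move Wdef: (\sum_(k <- ws) k.2) => W W_gt0 comb1 comb2.
have W_neq0 : (W%:~R : rat) != 0 by rewrite intr_eq0 gt_eqF.
pose wt x : int := \sum_(k <- ws | x == k.1) k.2.
have sum_wt (f : point -> int) :
    \sum_(i < size Y) (wt (nth p Y i))%:~R / W%:~R * (f (nth p Y i))%:~R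
    = (\sum_(k <- ws) k.2 * f k.1)%:~R / W%:~R :> rat.
  rewrite -(@sum_weights_uniq _ _ Y ws) //= rmorph_sum mulr_suml.
  rewrite [RHS](big_nth p) big_mkord; apply: eq_bigr => i _.
  by rewrite rmorphM /=; field.
exists (fun i => (wt (nth p Y i))%:~R / W%:~R); split; [|split; [|split]].
- move=> i _; rewrite divr_ge0 ?ler0z ?(ltW W_gt0) // /wt big_seq_cond.
  by apply: sumr_ge0 => k /andP[/ws_ge0].
- have := sum_wt (fun=> 1).
  have -> : \sum_(k <- ws) k.2 * 1 = W by rewrite -Wdef; apply: eq_bigr => k _; rewrite mulr1.
  by rewrite divff // => sum1; rewrite -[RHS]sum1; apply: eq_bigr => i _; rewrite mulr1.
- by rewrite sum_wt comb1 rmorphM /= mulrC mulKf.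
- by rewrite sum_wt comb2 rmorphM /= mulrC mulKf.
Qed.

Definition orient (a b c : point) : int :=
  (b.1 - a.1) * (c.2 - a.2) - (b.2 - a.2) * (c.1 - a.1).

Lemma orient_first (a c : point) : orient a a c = 0.
Proof. by rewrite /orient !subrr !mul0r subrr. Qed.

Lemma orient_last (a c : point) : orient a c c = 0.
Proof. by rewrite /orient mulrC subrr. Qed.

(* For [a.1 < p.1 < c.1], [0 <= orient a p c] says that [p] lies on or below
   the chord [ac].  A point on or below one chord and on or above another is a
   convex combination of the two points where its vertical line meets them. *)
Lemma in_conv_hull_between (P : seq point) (p a c a' c' : point) :
  uniq P -> p \in P -> a \in P -> c \in P -> a' \in P -> c' \in P ->
  a.1 < p.1 < c.1 -> a'.1 < p.1 < c'.1 ->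
  0 <= orient a p c -> orient a' p c' <= 0 -> in_conv_hull p (rem p P).
Proof.
move=> uP pP aP cP a'P c'P /andP[ap pc] /andP[a'p pc'] o_ge0 o'_le0.
have in_rem z : z \in P -> z.1 != p.1 -> z \in rem p P.
  by move=> zP zp; rewrite mem_rem_uniq // inE zP andbT; apply: contraNneq zp => ->.
have hull4 (wa wc wa' wc' : int) :
    0 <= wa -> 0 <= wc -> 0 <= wa' -> 0 <= wc' -> 0 < wa + wc + wa' + wc' ->
    wa * a.1 + wc * c.1 + wa' * a'.1 + wc' * c'.1 = (wa + wc + wa' + wc') * p.1 ->
    wa * a.2 + wc * c.2 + wa' * a'.2 + wc' * c'.2 = (wa + wc + wa' + wc') * p.2 ->
    in_conv_hull p (rem p P).
  move=> ga gc ga' gc' W_gt0 comb1 comb2.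
  apply: (@in_conv_hull_int_comb _ _ [:: (a, wa); (c, wc); (a', wa'); (c', wc')]);
    rewrite ?rem_uniq ?big_cons ?big_nil ?addr0 ?addrA //=.
  - move=> z; rewrite !inE => /or4P[] /eqP ->; apply: in_rem;
      by rewrite // neq_lt ?ap ?pc ?a'p ?pc' ?orbT.
  - by move=> k; rewrite !inE => /or4P[] /eqP ->.
case: (eqVneq (orient a p c) 0) => [o_eq0|o_neq0].
  apply: (hull4 (c.1 - p.1) (p.1 - a.1) 0 0); try lia.
  move: o_eq0; rewrite /orient; nia.
have o_gt0 : 0 < orient a p c by rewrite lt_def o_neq0.
apply: (hull4 (- orient a' p c' * (c.1 - p.1)) (- orient a' p c' * (p.1 - a.1))
          (orient a p c * (c'.1 - p.1)) (orient a p c * (p.1 - a'.1)));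
  by rewrite /orient in o_gt0 o'_le0 *; nia.
Qed.

Definition is_cup (Q : seq point) : Prop :=
  forall a b c : point, a \in Q -> b \in Q -> c \in Q ->
  a.1 < b.1 -> b.1 < c.1 -> 0 < orient a b c.

Definition is_cap (Q : seq point) : Prop :=
  forall a b c : point, a \in Q -> b \in Q -> c \in Q ->
  a.1 < b.1 -> b.1 < c.1 -> orient a b c < 0.

Lemma is_cup_sub (Q Q' : seq point) : {subset Q' <= Q} -> is_cup Q -> is_cup Q'.
Proof. by move=> sub cupQ a b c /sub aQ /sub bQ /sub cQ; apply: cupQ. Qed.

Lemma is_cap_sub (Q Q' : seq point) : {subset Q' <= Q} -> is_cap Q -> is_cap Q'.
Proof. by move=> sub capQ a b c /sub aQ /sub bQ /sub cQ; apply: capQ. Qed.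

Lemma orientE (a b c : point) :
  orient a b c = (b.1 - a.1) * (c.2 - b.2) - (b.2 - a.2) * (c.1 - b.1).
Proof. by rewrite /orient; ring. Qed.

(* The linear form [(x, y) |-> k y + m x] with [k > 0] separates the two edge
   vectors [b - a] and [c - b], which forces the turn at [b]. *)
Lemma orient_lt0_sep (a b c : point) (k m : int) : a.1 < b.1 -> b.1 < c.1 -> 0 < k ->
  0 < k * (b.2 - a.2) + m * (b.1 - a.1) -> k * (c.2 - b.2) + m * (c.1 - b.1) < 0 ->
  orient a b c < 0.
Proof.
rewrite orientE -[a.1 < b.1]subr_gt0 -[b.1 < c.1]subr_gt0.
move: (b.1 - a.1) (b.2 - a.2) (c.1 - b.1) (c.2 - b.2) => ux uy vx vy; nia.
Qed.

Lemma orient_gt0_sep (a b c : point) (k m : int) : a.1 < b.1 -> b.1 < c.1 -> 0 < k ->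
  k * (b.2 - a.2) + m * (b.1 - a.1) < 0 -> 0 < k * (c.2 - b.2) + m * (c.1 - b.1) ->
  0 < orient a b c.
Proof.
rewrite orientE -[a.1 < b.1]subr_gt0 -[b.1 < c.1]subr_gt0.
move: (b.1 - a.1) (b.2 - a.2) (c.1 - b.1) (c.2 - b.2) => ux uy vx vy; nia.
Qed.

Lemma size_le1_of_no_x_lt (Q : seq point) : uniq Q -> {in Q &, injective fst} ->
  {in Q &, forall u v, ~ u.1 < v.1} -> (size Q <= 1)%N.
Proof.
case: Q => [|u [|v Q]] //= /andP[+ _] inj no_lt; rewrite inE negb_or => /andP[uv _].
have uQ : u \in [:: u, v & Q] by rewrite mem_head.
have vQ : v \in [:: u, v & Q] by rewrite !inE eqxx orbT.
case: (ltgtP u.1 v.1) => [uv' | vu | /(inj _ _ uQ vQ) u_v].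
- by case: (no_lt u v uQ vQ).
- by case: (no_lt v u vQ uQ).
- by rewrite u_v eqxx in uv.
Qed.

Lemma size_filter_predC (T : Type) (a : pred T) (s : seq T) :
  size s = (size (filter a s) + size (filter (predC a) s))%N.
Proof. by rewrite !size_filter count_predC. Qed.

(* If every slope from [A] to [B] exceeds [s] and every slope inside [A] or
   [B] is below [s], then a cup through a point of [A] has at most one point in
   [B], and a cap through a point of [B] has at most one point in [A]. *)
Section CupCapSplit.

Variables (A B : seq point) (s : int).
Hypothesis A_left_B : forall a b : point, a \in A -> b \in B ->
  a.1 < b.1 /\ s * (b.1 - a.1) < b.2 - a.2.
Hypotheses (injA : {in A &, injective fst}) (injB : {in B &, injective fst}).
Hypothesis flatA : {in A &, forall p q : point, p.1 < q.1 -> q.2 - p.2 < s * (q.1 - p.1)}.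
Hypothesis flatB : {in B &, forall p q : point, p.1 < q.1 -> q.2 - p.2 < s * (q.1 - p.1)}.

Variables (Q : seq point) (m : nat).
Hypotheses (uQ : uniq Q) (QAB : {subset Q <= A ++ B}).

Let QA := filter (mem A) Q.
Let QB := filter (predC (mem A)) Q.

Let sizeQ : size Q = (size QA + size QB)%N. Proof. exact: size_filter_predC. Qed.
Let QA_sub : {subset QA <= Q}. Proof. by move=> x; rewrite mem_filter => /andP[]. Qed.
Let QB_sub : {subset QB <= Q}. Proof. by move=> x; rewrite mem_filter => /andP[]. Qed.
Let QA_A : {subset QA <= A}. Proof. by move=> x; rewrite mem_filter => /andP[]. Qed.
Let QB_B : {subset QB <= B}.
Proof.
by move=> x; rewrite mem_filter => /andP[/= xA /QAB]; rewrite mem_cat (negbTE xA).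
Qed.

Lemma cup_split_size :
  (forall Q', uniq Q' -> {subset Q' <= A} -> is_cup Q' -> (size Q' <= m)%N) ->
  (forall Q', uniq Q' -> {subset Q' <= B} -> is_cup Q' -> (size Q' <= m.+1)%N) ->
  is_cup Q -> (size Q <= m.+1)%N.
Proof.
move=> cupA cupB cupQ.
have cup_sub Q' : {subset Q' <= Q} -> is_cup Q' by move/is_cup_sub; apply.
case EA: QA => [|a QA'].
  by rewrite sizeQ EA; apply: cupB (filter_uniq _ uQ) QB_B (cup_sub _ QB_sub).
have aQA : a \in QA by rewrite EA mem_head.
suff : (size QB <= 1)%N.
  by rewrite sizeQ; have := cupA QA (filter_uniq _ uQ) QA_A (cup_sub _ QA_sub); lia.
apply: size_le1_of_no_x_lt; rewrite ?filter_uniq //.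
  by move=> u v /QB_B uB /QB_B vB; apply: injB.
move=> u v uQB vQB uv; have [au steep_au] := A_left_B (QA_A aQA) (QB_B uQB).
have := cupQ _ _ _ (QA_sub aQA) (QB_sub uQB) (QB_sub vQB) au uv.
apply/negP; rewrite -leNgt; apply/ltW/(@orient_lt0_sep _ _ _ 1 (- s)) => //.
  by rewrite mul1r mulNr subr_gt0.
by rewrite mul1r mulNr subr_lt0; apply: flatB => //; apply: QB_B.
Qed.

Lemma cap_split_size :
  (forall Q', uniq Q' -> {subset Q' <= A} -> is_cap Q' -> (size Q' <= m.+1)%N) ->
  (forall Q', uniq Q' -> {subset Q' <= B} -> is_cap Q' -> (size Q' <= m)%N) ->
  is_cap Q -> (size Q <= m.+1)%N.
Proof.
move=> capA capB capQ.
have cap_sub Q' : {subset Q' <= Q} -> is_cap Q' by move/is_cap_sub; apply.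
case EB: QB => [|b QB'].
  by rewrite sizeQ EB addn0; apply: capA (filter_uniq _ uQ) QA_A (cap_sub _ QA_sub).
have bQB : b \in QB by rewrite EB mem_head.
suff : (size QA <= 1)%N.
  by rewrite sizeQ; have := capB QB (filter_uniq _ uQ) QB_B (cap_sub _ QB_sub); lia.
apply: size_le1_of_no_x_lt; rewrite ?filter_uniq //.
  by move=> u v /QA_A uA /QA_A vA; apply: injA.
move=> u v uQA vQA uv; have [vb steep_vb] := A_left_B (QA_A vQA) (QB_B bQB).
have := capQ _ _ _ (QA_sub uQA) (QA_sub vQA) (QB_sub bQB) uv vb.
apply/negP; rewrite -leNgt; apply/ltW/(@orient_gt0_sep _ _ _ 1 (- s)) => //.
  by rewrite mul1r mulNr subr_lt0; apply: flatA => //; apply: QA_A.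
by rewrite mul1r mulNr subr_gt0.
Qed.

End CupCapSplit.

Lemma shift_pt_sub1 (v p q : point) : (shift_pt v q).1 - (shift_pt v p).1 = q.1 - p.1.
Proof. by rewrite /= opprD addrACA subrr addr0. Qed.

Lemma shift_pt_sub2 (v p q : point) : (shift_pt v q).2 - (shift_pt v p).2 = q.2 - p.2.
Proof. by rewrite /= opprD addrACA subrr addr0. Qed.

Lemma shift_ptA (u v p : point) :
  shift_pt u (shift_pt v p) = shift_pt (v.1 + u.1, v.2 + u.2) p.
Proof. by rewrite /shift_pt /= !addrA. Qed.

Lemma Skl_small k l : (k <= 2)%N || (l <= 2)%N -> Skl k l = [:: (0, 0)].
Proof. by case: k => [|k] //=; case: l => [|l] //= ->. Qed.

Lemma Skl_rec k l : (2 < k)%N -> (2 < l)%N ->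
  Skl k l = Skl k.-1 l ++ map (shift_pt (delta (k + l - 1), delta' (k + l - 1))) (Skl k l.-1).
Proof.
by case: k => [|k] // hk; case: l => [|l] // hl /=; rewrite leqNgt hk leqNgt hl.
Qed.

Lemma delta_succ n : delta n.+1 = 3 * (4 ^ n)%N%:Z.
Proof. by rewrite /delta subn1 /= PoszM. Qed.

Lemma delta'_succ n : delta' n.+1 = (3 * n%:Z + 4) * (4 ^ n)%N%:Z.
Proof. by rewrite /delta' subn1 /= PoszM; congr (_ * _); lia. Qed.

(* A region containing S_{k,l} for M = k + l - 1 and P = 4 ^ M; it keeps the
   slopes from S_{k-1,l} to the translate of S_{k,l-1} inside (M + 1, M + 2). *)
Definition skl_region (M P : int) (p : point) : Prop :=
  [/\ 0 <= p.1 < P, 0 <= p.2, - P < p.2 - (M + 1) * p.1 <= 0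
    & - (2 * P) < p.2 - (M + 2) * p.1].

Definition steep (s : int) (p q : point) : Prop :=
  q.1 - p.1 < q.2 - p.2 < s * (q.1 - p.1).

Lemma steep_mono (s s' : int) (p q : point) :
  s <= s' -> p.1 < q.1 -> steep s p q -> steep s' p q.
Proof. by rewrite /steep -subr_gt0; move: (q.1 - p.1) (q.2 - p.2) => d e; nia. Qed.

Lemma steep_shift (s : int) (v p q : point) :
  steep s (shift_pt v p) (shift_pt v q) = steep s p q.
Proof. by rewrite /steep !shift_pt_sub1 !shift_pt_sub2. Qed.

Definition skl_shape (M P : int) (S : seq point) : Prop :=
  [/\ {in S, forall p, skl_region M P p}, {in S &, injective fst}
    & {in S &, forall p q, p.1 < q.1 -> steep (M + 1) p q}].

Section SklRegion.

Variables (M P : int).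
Hypotheses (M_ge0 : 0 <= M) (P_gt0 : 0 < P).

Definition skl_step : point := (3 * P, (3 * M + 4) * P).

Lemma skl_region_mono (p : point) : skl_region M P p -> skl_region (M + 1) (4 * P) p.
Proof. by case; split; nia. Qed.

Lemma skl_region_step (p : point) :
  skl_region M P p -> skl_region (M + 1) (4 * P) (shift_pt skl_step p).
Proof. by case; split; rewrite /=; nia. Qed.

Lemma skl_region_cross (a b : point) : skl_region M P a -> skl_region M P b ->
  let b' := shift_pt skl_step b in
  [/\ a.1 < b'.1, (M + 1) * (b'.1 - a.1) < b'.2 - a.2 & steep (M + 2) a b'].
Proof. by move=> [? ? ? ?] [? ? ? ?] /=; split; rewrite /steep /=; nia. Qed.

Lemma skl_shape_step (A B : seq point) : skl_shape M P A -> skl_shape M P B ->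
  skl_shape (M + 1) (4 * P) (A ++ map (shift_pt skl_step) B).
Proof.
move=> [regA injA steepA] [regB injB steepB].
have cross a b : a \in A -> b \in B -> let b' := shift_pt skl_step b in
    [/\ a.1 < b'.1, (M + 1) * (b'.1 - a.1) < b'.2 - a.2 & steep (M + 2) a b'].
  by move=> aA bB; apply: skl_region_cross; [apply: regA | apply: regB].
split.
- move=> p; rewrite mem_cat => /orP[pA | /mapP[b bB ->]].
  + exact/skl_region_mono/regA.
  + exact/skl_region_step/regB.
- move=> p q; rewrite !mem_cat => /orP[pA | /mapP[b bB ->]] /orP[qA | /mapP[b' bB' ->]].
  + exact: injA.
  + by case: (cross p b' pA bB') => /[swap] _ /[swap] _ /lt_eqF/eqP.
  + by case: (cross q b qA bB) => /[swap] _ /[swap] _ /gt_eqF/eqP.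
  + by move=> /= /addIr /(injB _ _ bB bB') ->.
- have steep_succ p q : p.1 < q.1 -> steep (M + 1) p q -> steep (M + 1 + 1) p q.
    by apply: steep_mono; rewrite lerDl.
  move=> p q; rewrite !mem_cat => /orP[pA | /mapP[b bB ->]] /orP[qA | /mapP[b' bB' ->]] pq.
  + exact/steep_succ/steepA.
  + by case: (cross p b' pA bB') => _ _; rewrite -addrA.
  + by case: (cross q b qA bB) => /(lt_trans pq); rewrite ltxx.
  + apply: steep_succ => //; rewrite steep_shift.
    by apply: steepB => //; move: pq; rewrite /= ltrD2r.
Qed.

End SklRegion.

Lemma Skl_shape k l : (2 <= k)%N -> (2 <= l)%N ->
  skl_shape (k + l - 1)%N%:Z (4 ^ (k + l - 1))%N%:Z (Skl k l).
Proof.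
move nE: (k + l - 1)%N => n; elim: n k l nE => [|n IH] k l nE k_ge2 l_ge2; first lia.
have P_gt0 m : 0 < (4 ^ m)%N%:Z by rewrite ltz_nat expn_gt0.
case: (boolP ((k <= 2)%N || (l <= 2)%N)) => [small | /norP[]].
  rewrite Skl_small //; split=> [p | p q | p q].
  - by rewrite inE => /eqP ->; have := P_gt0 n.+1; split; rewrite /= ?mulr0; lia.
  - by rewrite !inE => /eqP -> /eqP ->.
  - by rewrite !inE => /eqP -> /eqP ->; rewrite ltxx.
rewrite -!ltnNge => k_gt2 l_gt2.
rewrite Skl_rec // nE delta_succ delta'_succ (_ : n.+1%:Z = n%:Z + 1); last lia.
rewrite expnS PoszM.
apply: skl_shape_step => //; apply: IH; lia.
Qed.

Lemma shift_pt_lt1 (v p q : point) : ((shift_pt v p).1 < (shift_pt v q).1) = (p.1 < q.1).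
Proof. exact: ltrD2r. Qed.

Lemma skl_shape_shift (M P : int) (S : seq point) (v : point) : skl_shape M P S ->
  {in map (shift_pt v) S &, injective fst} /\
  {in map (shift_pt v) S &,
    forall p q : point, p.1 < q.1 -> q.2 - p.2 < (M + 1) * (q.1 - p.1)}.
Proof.
move=> [_ inj st]; split=> _ _ /mapP[p pS ->] /mapP[q qS ->].
  by move=> /addIr /(inj _ _ pS qS) ->.
rewrite shift_pt_lt1 !shift_pt_sub1 !shift_pt_sub2 => pq.
by case/andP: (st p q pS qS pq).
Qed.

Lemma Skl_cup_cap_size k l (v : point) (Q : seq point) : (2 <= k)%N -> (2 <= l)%N ->
  uniq Q -> {subset Q <= map (shift_pt v) (Skl k l)} ->
  (is_cup Q -> (size Q <= k.-1)%N) /\ (is_cap Q -> (size Q <= l.-1)%N).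
Proof.
move nE: (k + l - 1)%N => n.
elim: n k l nE v Q => [|n IH] k l nE v Q k_ge2 l_ge2 uQ QS; first lia.
case: (boolP ((k <= 2)%N || (l <= 2)%N)) => [small | /norP[]].
  have Q_le1 : (size Q <= 1)%N by move: QS; rewrite Skl_small // => /(uniq_leq_size uQ).
  by split=> _; lia.
rewrite -!ltnNge => k_gt2 l_gt2.
have shapeA := @Skl_shape k.-1 l ltac:(lia) l_ge2.
have shapeB := @Skl_shape k l.-1 k_ge2 ltac:(lia).
rewrite (_ : (k.-1 + l - 1 = n)%N) in shapeA; last lia.
rewrite (_ : (k + l.-1 - 1 = n)%N) in shapeB; last lia.
move: QS; rewrite Skl_rec // map_cat -map_comp nE delta_succ delta'_succ.
set M := n%:Z; set P := (4 ^ n)%N%:Z.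
have M_ge0 : 0 <= M by [].
have P_gt0 : 0 < P by rewrite ltz_nat expn_gt0.
set v' : point := ((skl_step M P).1 + v.1, (skl_step M P).2 + v.2).
rewrite (eq_map (shift_ptA v (skl_step M P))) -/v'.
set A := map (shift_pt v) (Skl k.-1 l).
set B := map (shift_pt v') (Skl k l.-1).
move=> QAB.
have A_left_B a b : a \in A -> b \in B -> a.1 < b.1 /\ (M + 1) * (b.1 - a.1) < b.2 - a.2.
  case/mapP=> a0 a0S ->; case/mapP=> b0 b0S ->; rewrite -shift_ptA.
  rewrite shift_pt_lt1 !shift_pt_sub1 shift_pt_sub2.
  have [regA _ _] := shapeA; have [regB _ _] := shapeB.
  by case: (skl_region_cross M_ge0 P_gt0 (regA _ a0S) (regB _ b0S)).
have [injA flatA] := skl_shape_shift v shapeA.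
have [injB flatB] := skl_shape_shift v' shapeB.
have IHA Q' := IH k.-1 l ltac:(lia) v Q' ltac:(lia) l_ge2.
have IHB Q' := IH k l.-1 ltac:(lia) v' Q' k_ge2 ltac:(lia).
have k_pred : k.-1 = k.-2.+1 by lia.
have l_pred : l.-1 = l.-2.+1 by lia.
split.
- rewrite k_pred; apply: (cup_split_size A_left_B) => // Q' uQ' sub cup.
  + by case: (IHA Q' uQ' sub) => /(_ cup).
  + by case: (IHB Q' uQ' sub) => /(_ cup); rewrite k_pred.
- rewrite l_pred; apply: (cap_split_size A_left_B) => // Q' uQ' sub cap.
  + by case: (IHA Q' uQ' sub) => _ /(_ cap); rewrite l_pred.
  + by case: (IHB Q' uQ' sub) => _ /(_ cap).
Qed.

Lemma lin_perturb_gt0 (R : realDomainType) (a b X Y c e1 e2 E1 E2 : R) :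
  `|e1| <= E1 -> `|e2| <= E2 -> `|a| * E1 + `|b| * E2 < c * (a * X + b * Y) ->
  0 < a * (c * X + e1) + b * (c * Y + e2).
Proof.
move=> e1_le e2_le gap.
have err : `|a * e1 + b * e2| <= `|a| * E1 + `|b| * E2.
  by apply: le_trans (ler_normD _ _) _; rewrite !normrM lerD // ler_wpM2l.
by move: err; rewrite ler_norml => /andP[lo _]; lra.
Qed.

Lemma gap_of_steps (f : nat -> int) (K : int) i j : 0 <= K -> (i < j)%N ->
  (forall m, (i <= m < j)%N -> K <= f m.+1 - f m) -> K <= f j - f i.
Proof.
move=> K_ge0; elim: j => // j IH ij steps.
have step_j : K <= f j.+1 - f j by apply: steps; rewrite leqnn andbT -ltnS.
case: (ltnP i j) => [lt | ji]; last by rewrite (_ : i = j) //; lia.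
have : K <= f j - f i by apply: IH => // m /andP[im mj]; apply: steps; rewrite im ltnW.
lia.
Qed.

Lemma w_succ t i : w t i.+1 = ((w t i).1 + (3 * (t - i))%N%:Z, (w t i).2 - (3 * i)%N%:Z).
Proof. by rewrite /w /= !big_ord_recr /= opprD. Qed.

Definition anchor_form (a b : int) (t i : nat) : int := a * (w t i).1 + b * (w t i).2.

Lemma anchor_form_succ a b t i : (i <= t)%N ->
  anchor_form a b t i.+1 - anchor_form a b t i = 3 * (a * (t%:Z - i%:Z) - b * i%:Z).
Proof.
move=> le_it; rewrite /anchor_form w_succ /=.
have -> : (3 * (t - i))%N%:Z = 3 * (t%:Z - i%:Z) by lia.
have -> : (3 * i)%N%:Z = 3 * i%:Z by lia.
ring.
Qed.

Definition St_block (t i : nat) : seq point := map (shift_pt (q t i)) (Skl (t - i) (i + 2)).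

Definition blk (t : nat) (p : point) : nat :=
  find (fun i => p \in St_block t i) (iota 0 (t - 1)).

Lemma blkP (t : nat) (p : point) :
  p \in St t -> (blk t p < t - 1)%N /\ p \in St_block t (blk t p).
Proof.
case/flattenP=> _ /mapP[i i_lt ->] p_i.
have has_p : has (fun i => p \in St_block t i) (iota 0 (t - 1)) by apply/hasP; exists i.
by move: (has_p) (nth_find 0 has_p); rewrite has_find size_iota => lt; rewrite nth_iota.
Qed.

Section Blocks.

Variable t : nat.
Hypothesis t_ge2 : (2 <= t)%N.

Let P : int := (4 ^ t.+1)%N%:Z.
Let P_gt0 : 0 < P. Proof. by rewrite ltz_nat expn_gt0. Qed.

Lemma St_block_shape (i : nat) : (i < t - 1)%N -> skl_shape t.+1%:Z P (Skl (t - i) (i + 2)).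
Proof.
by move=> i_lt; rewrite /P -(_ : (t - i + (i + 2) - 1 = t.+1)%N); [apply: Skl_shape|]; lia.
Qed.

(* A point of [B_j] is [c * w_j] plus a point of the box [0, P) x [0, (t + 2) P),
   where [c = (t + 1) P]; the gap condition makes the anchors dominate. *)
Lemma St_block_form_gt0 (i j : nat) (p r : point) (a b : int) :
  (i < t - 1)%N -> (j < t - 1)%N -> p \in St_block t i -> r \in St_block t j ->
  `|a| + `|b| * (t%:Z + 2) < (t%:Z + 1) * (anchor_form a b t j - anchor_form a b t i) ->
  0 < a * (r.1 - p.1) + b * (r.2 - p.2).
Proof.
move=> i_lt j_lt /mapP[p0 p0S ->] /mapP[r0 r0S ->] gap.
have box i0 x : (i0 < t - 1)%N -> x \in Skl (t - i0) (i0 + 2) ->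
    0 <= x.1 < P /\ 0 <= x.2 < (t%:Z + 2) * P.
  move=> i0_lt xS; have [reg _ _] := St_block_shape i0_lt; case: (reg x xS).
  by move: (x.1) (x.2) => x1 x2; nia.
have [/andP[p1_ge0 p1_lt] /andP[p2_ge0 p2_lt]] := box _ _ i_lt p0S.
have [/andP[r1_ge0 r1_lt] /andP[r2_ge0 r2_lt]] := box _ _ j_lt r0S.
set c : int := ((t + 1) * 4 ^ (t + 1))%N%:Z.
have cE : c = (t%:Z + 1) * P by rewrite /c /P addn1 PoszM; congr (_ * _); lia.
have -> : a * ((shift_pt (q t j) r0).1 - (shift_pt (q t i) p0).1) +
          b * ((shift_pt (q t j) r0).2 - (shift_pt (q t i) p0).2) =
    a * (c * ((w t j).1 - (w t i).1) + (r0.1 - p0.1)) +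
    b * (c * ((w t j).2 - (w t i).2) + (r0.2 - p0.2)) by rewrite /= /c; ring.
apply: (@lin_perturb_gt0 _ a b _ _ c _ _ P ((t%:Z + 2) * P)).
- by rewrite ler_norml; lia.
- by rewrite ler_norml; lia.
have -> : `|a| * P + `|b| * ((t%:Z + 2) * P) = (`|a| + `|b| * (t%:Z + 2)) * P by ring.
have -> : c * (a * ((w t j).1 - (w t i).1) + b * ((w t j).2 - (w t i).2)) =
    (t%:Z + 1) * (anchor_form a b t j - anchor_form a b t i) * P by rewrite cE /anchor_form; ring.
by rewrite ltr_pM2r.
Qed.

Lemma St_block_form_gt0_of_steps (i j : nat) (p r : point) (a b K : int) :
  0 <= K -> (i < j)%N -> (j < t - 1)%N -> p \in St_block t i -> r \in St_block t j ->
  (forall m, (i <= m < j)%N -> K <= a * (t%:Z - m%:Z) - b * m%:Z) ->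
  `|a| + `|b| * (t%:Z + 2) < 3 * (t%:Z + 1) * K ->
  0 < a * (r.1 - p.1) + b * (r.2 - p.2).
Proof.
move=> K_ge0 ij j_lt pB rB steps gap.
apply: (St_block_form_gt0 (ltn_trans ij j_lt) j_lt pB rB).
have : 3 * K <= anchor_form a b t j - anchor_form a b t i.
  apply: gap_of_steps ij _ => [|m /andP[im mj]]; first lia.
  by rewrite anchor_form_succ; [have := steps m; rewrite im mj; lia | lia].
by move: (anchor_form _ _ _ _ - _) => W; nia.
Qed.

Lemma St_block_lt1 (i j : nat) (p r : point) : (i < j)%N -> (j < t - 1)%N ->
  p \in St_block t i -> r \in St_block t j -> p.1 < r.1.
Proof.
move=> ij j_lt pB rB.
have steps m : (i <= m < j)%N -> 1 <= 1 * (t%:Z - m%:Z) - 0 * m%:Z by move=> ?; lia.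
have gap : `|1 : int| + `|0 : int| * (t%:Z + 2) < 3 * (t%:Z + 1) * 1.
  by rewrite normr1 normr0; lia.
by have := St_block_form_gt0_of_steps ler01 ij j_lt pB rB steps gap; lia.
Qed.

Lemma St_block_below_diag (i j : nat) (p r : point) : (i < j)%N -> (j < t - 1)%N ->
  p \in St_block t i -> r \in St_block t j -> r.2 - p.2 < r.1 - p.1.
Proof.
move=> ij j_lt pB rB.
have steps m : (i <= m < j)%N -> t%:Z <= 1 * (t%:Z - m%:Z) - (-1) * m%:Z by move=> ?; lia.
have gap : `|1 : int| + `|-1 : int| * (t%:Z + 2) < 3 * (t%:Z + 1) * t%:Z.
  by rewrite normr1 normrN1; nia.
by have := St_block_form_gt0_of_steps (le0z_nat t) ij j_lt pB rB steps gap; lia.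
Qed.

(* The anchors [w t i] of the blocks form a concave chain whose edge slopes
   [-i / (t - i)] decrease; the line through the anchor of block [j] with
   normal [(2 j - 1, 2 t - 2 j + 1)] separates the earlier anchors from the
   later ones. *)
Lemma St_block_turn_in (i j : nat) (p r : point) :
  (0 < j)%N -> (i < j)%N -> (j < t - 1)%N ->
  p \in St_block t i -> r \in St_block t j ->
  0 < (2 * t%:Z - 2 * j%:Z + 1) * (r.2 - p.2) + (2 * j%:Z - 1) * (r.1 - p.1).
Proof.
move=> j_gt0 ij j_lt pB rB.
have steps m : (i <= m < j)%N ->
    t%:Z <= (2 * j%:Z - 1) * (t%:Z - m%:Z) - (2 * t%:Z - 2 * j%:Z + 1) * m%:Z.
  move=> /andP[_ mj].
  have -> : (2 * j%:Z - 1) * (t%:Z - m%:Z) - (2 * t%:Z - 2 * j%:Z + 1) * m%:Z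
      = t%:Z * (2 * j%:Z - 1 - 2 * m%:Z) by ring.
  nia.
have gap : `|2 * j%:Z - 1| + `|2 * t%:Z - 2 * j%:Z + 1| * (t%:Z + 2) < 3 * (t%:Z + 1) * t%:Z.
  by rewrite !gtr0_norm; nia.
by have := St_block_form_gt0_of_steps (le0z_nat t) ij j_lt pB rB steps gap; lia.
Qed.

Lemma St_block_turn_out (j k : nat) (p r : point) :
  (0 < j)%N -> (j < k)%N -> (k < t - 1)%N ->
  p \in St_block t j -> r \in St_block t k ->
  (2 * t%:Z - 2 * j%:Z + 1) * (r.2 - p.2) + (2 * j%:Z - 1) * (r.1 - p.1) < 0.
Proof.
move=> j_gt0 jk k_lt pB rB.
have steps m : (j <= m < k)%N ->
    t%:Z <= - (2 * j%:Z - 1) * (t%:Z - m%:Z) - - (2 * t%:Z - 2 * j%:Z + 1) * m%:Z.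
  move=> /andP[jm _].
  have -> : - (2 * j%:Z - 1) * (t%:Z - m%:Z) - - (2 * t%:Z - 2 * j%:Z + 1) * m%:Z
      = t%:Z * (2 * m%:Z + 1 - 2 * j%:Z) by ring.
  nia.
have gap : `|- (2 * j%:Z - 1)| + `|- (2 * t%:Z - 2 * j%:Z + 1)| * (t%:Z + 2)
    < 3 * (t%:Z + 1) * t%:Z.
  by rewrite !normrN !gtr0_norm; nia.
by have := St_block_form_gt0_of_steps (le0z_nat t) jk k_lt pB rB steps gap; lia.
Qed.

Lemma St_block_steep (i : nat) (p r : point) :
  (i < t - 1)%N -> p \in St_block t i -> r \in St_block t i -> p.1 < r.1 -> r.1 - p.1 < r.2 - p.2.
Proof.
move=> i_lt /mapP[p0 p0S ->] /mapP[r0 r0S ->]; rewrite shift_pt_lt1 => pr.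
have [_ _ st] := St_block_shape i_lt.
by have := st _ _ p0S r0S pr; rewrite -(steep_shift _ (q t i)) => /andP[].
Qed.

Lemma St_block_inj (i : nat) : (i < t - 1)%N -> {in St_block t i &, injective fst}.
Proof. by move=> i_lt; case: (skl_shape_shift (q t i) (St_block_shape i_lt)). Qed.

Lemma St_block_cup_cap_size (i : nat) (Q : seq point) :
  (i < t - 1)%N -> uniq Q -> {subset Q <= St_block t i} ->
  (is_cup Q -> (size Q <= t - i - 1)%N) /\ (is_cap Q -> (size Q <= i + 1)%N).
Proof.
move=> i_lt uQ QB.
have [cup cap] := Skl_cup_cap_size (k := t - i) (l := i + 2) ltac:(lia) ltac:(lia) uQ QB.
by split=> [/cup | /cap]; rewrite ?subn1 ?addn2 ?addn1.
Qed.

Lemma blk_lt1 (p r : point) : p \in St t -> r \in St t -> (blk t p < blk t r)%N -> p.1 < r.1.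
Proof.
move=> /blkP[_ pB] /blkP[r_lt rB] pr; exact: St_block_lt1 pr r_lt pB rB.
Qed.

Lemma blk_le (p r : point) : p \in St t -> r \in St t -> p.1 <= r.1 -> (blk t p <= blk t r)%N.
Proof. by move=> pS rS; apply: contraTT; rewrite -!ltnNge -!ltNge; apply: blk_lt1. Qed.

Lemma St_inj : {in St t &, injective fst}.
Proof.
move=> p r pS rS pr; have [p_lt pB] := blkP pS; have [r_lt rB] := blkP rS.
case: (ltngtP (blk t p) (blk t r)) => [lt | gt | eq].
- by have := blk_lt1 pS rS lt; rewrite pr ltxx.
- by have := blk_lt1 rS pS gt; rewrite pr ltxx.
- by rewrite eq in pB; apply: St_block_inj pB rB pr.
Qed.

Lemma St_orient_gt0 (L x y : point) : L \in St t -> x \in St t -> y \in St t ->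
  (blk t L < blk t x)%N -> blk t x = blk t y -> x.1 < y.1 -> 0 < orient L x y.
Proof.
move=> LS xS yS Lx xy_blk xy; have [_ LB] := blkP LS.
have [x_lt xB] := blkP xS; have [_ yB] := blkP yS; rewrite -xy_blk in yB.
apply: (@orient_gt0_sep _ _ _ 1 (-1)) => //; first exact: blk_lt1 Lx.
- by have := St_block_below_diag Lx x_lt LB xB; lia.
- by have := St_block_steep x_lt xB yB xy; lia.
Qed.

Lemma St_orient_lt0 (L x R : point) : L \in St t -> x \in St t -> R \in St t ->
  L.1 < x.1 -> x.1 < R.1 -> (blk t x < blk t R)%N -> orient L x R < 0.
Proof.
move=> LS xS RS Lx xR xR_blk; have [L_lt LB] := blkP LS.
have [x_lt xB] := blkP xS; have [R_lt RB] := blkP RS.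
have := blk_le LS xS (ltW Lx); rewrite leq_eqVlt => /orP[/eqP Lx_blk | Lx_blk].
  apply: (@orient_lt0_sep _ _ _ 1 (-1)) => //.
  - by rewrite -Lx_blk in xB; have := St_block_steep L_lt LB xB Lx; lia.
  - by have := St_block_below_diag xR_blk R_lt xB RB; lia.
apply: (@orient_lt0_sep _ _ _ (2 * t%:Z - 2 * (blk t x)%:Z + 1) (2 * (blk t x)%:Z - 1)) => //.
- lia.
- exact: (St_block_turn_in (leq_ltn_trans (leq0n _) Lx_blk) Lx_blk x_lt LB xB).
- exact: (St_block_turn_out (leq_ltn_trans (leq0n _) Lx_blk) xR_blk R_lt xB RB).
Qed.

Lemma St_cap_blk_inj (Q : seq point) (L : point) :
  {subset Q <= St t} -> is_cap Q -> L \in Q ->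
  {in [seq x <- Q | (blk t L < blk t x)%N] &, injective (blk t)}.
Proof.
move=> QS capQ LQ x y; rewrite !mem_filter => /andP[Lx xQ] /andP[Ly yQ] xy_blk.
have no_lt u v : u \in Q -> v \in Q -> (blk t L < blk t u)%N -> blk t u = blk t v ->
    ~ u.1 < v.1.
  move=> uQ vQ Lu uv_blk uv; have uS := QS u uQ.
  have := capQ L u v LQ uQ vQ (blk_lt1 (QS L LQ) uS Lu) uv.
  by rewrite ltNge ltW // (St_orient_gt0 (QS L LQ) uS (QS v vQ) Lu uv_blk uv).
apply: (St_inj (QS x xQ) (QS y yQ)); case: (ltgtP x.1 y.1) => // [xy | yx].
- by case: (no_lt x y xQ yQ Lx xy_blk xy).
- by case: (no_lt y x yQ xQ Ly (esym xy_blk) yx).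
Qed.

Lemma St_cap_size (Q : seq point) (L R : point) :
  uniq Q -> {subset Q <= St t} -> is_cap Q -> L \in Q -> R \in St t ->
  (forall x, x \in Q -> L.1 <= x.1 <= R.1) -> (size Q <= (blk t R).+1)%N.
Proof.
move=> uQ QS capQ LQ RS range; have LS := QS L LQ.
set iL := blk t L; set iR := blk t R; have [iL_lt LB] := blkP LS.
have blk_range x : x \in Q -> (iL <= blk t x <= iR)%N.
  move=> xQ; have /andP[Lx xR] := range x xQ.
  by rewrite (blk_le LS (QS x xQ) Lx) (blk_le (QS x xQ) RS xR).
have iLR : (iL <= iR)%N by case/andP: (blk_range L LQ).
set QO := [seq x <- Q | (iL < blk t x)%N]; set QL := [seq x <- Q | ~~ (iL < blk t x)%N].
have QL_le : (size QL <= iL + 1)%N.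
  have QL_B : {subset QL <= St_block t iL}.
    move=> x; rewrite mem_filter -leqNgt => /andP[x_iL xQ]; have [_ xB] := blkP (QS x xQ).
    suff <- : blk t x = iL by [].
    by apply/eqP; rewrite eqn_leq x_iL; case/andP: (blk_range x xQ).
  have [_ capL] := St_block_cup_cap_size iL_lt (filter_uniq _ uQ) QL_B.
  by apply/capL/(is_cap_sub _ capQ) => x; rewrite mem_filter => /andP[].
have QO_le : (size QO <= iR - iL)%N.
  rewrite -(size_map (blk t)) -(size_iota iL.+1 (iR - iL)).
  apply: uniq_leq_size.
    by rewrite (map_inj_in_uniq (St_cap_blk_inj QS capQ LQ)) filter_uniq.
  move=> _ /mapP[x + ->]; rewrite mem_filter mem_iota => /andP[Lx xQ].
  by have := blk_range x xQ; lia.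
rewrite (size_filter_predC (fun x => iL < blk t x)%N).
by apply: leq_trans (leq_add QO_le QL_le) _; lia.
Qed.

Lemma St_cup_size (Q : seq point) (L R : point) :
  uniq Q -> {subset Q <= St t} -> is_cup Q -> L \in Q -> R \in Q ->
  (forall x, x \in Q -> L.1 <= x.1 <= R.1) -> (size Q <= t - blk t R)%N.
Proof.
move=> uQ QS cupQ LQ RQ range; have LS := QS L LQ; have RS := QS R RQ.
set iR := blk t R; have [iR_lt RB] := blkP RS.
set QR := filter (mem (St_block t iR)) Q; set QO := filter (predC (mem (St_block t iR))) Q.
have QR_le : (size QR <= t - iR - 1)%N.
  have QR_B : {subset QR <= St_block t iR} by move=> x; rewrite mem_filter => /andP[].
  have [cupR _] := St_block_cup_cap_size iR_lt (filter_uniq _ uQ) QR_B.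
  by apply/cupR/(is_cup_sub _ cupQ) => x; rewrite mem_filter => /andP[].
have QO_le : (size QO <= 1)%N.
  apply: (@uniq_leq_size _ _ [:: L] (filter_uniq _ uQ)) => x.
  rewrite mem_filter inE => /andP[/= xnR xQ]; apply: contraT => xL.
  have xS := QS x xQ; have [_ xB] := blkP xS; have /andP[Lx _] := range x xQ.
  have Lx' : L.1 < x.1.
    rewrite lt_neqAle Lx andbT; apply: contra xL => /eqP/(St_inj LS xS) ->.
    exact: mem_head.
  have xR_blk : (blk t x < iR)%N.
    have /andP[_ xR] := range x xQ.
    rewrite ltn_neqAle (blk_le xS RS xR) andbT.
    by apply: contraNneq xnR => <-.
  have := cupQ L x R LQ xQ RQ Lx' (blk_lt1 xS RS xR_blk).
  by rewrite ltNge ltW // (St_orient_lt0 LS xS RS Lx' (blk_lt1 xS RS xR_blk)).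
rewrite (size_filter_predC (mem (St_block t iR))).
by apply: leq_trans (leq_add QR_le QO_le) _; lia.
Qed.

End Blocks.

Definition upper_chain (L R : point) (P : seq point) := [seq x <- P | orient L x R <= 0].
Definition lower_chain (L R : point) (P : seq point) := [seq x <- P | 0 <= orient L x R].

Lemma convex_position_chains (P : seq point) (L R : point) :
  convex_position P -> L \in P -> R \in P -> L != R ->
  (forall x, x \in P -> L.1 <= x.1 <= R.1) ->
  [/\ (size P + 2 <= size (upper_chain L R P) + size (lower_chain L R P))%N,
      is_cap (upper_chain L R P) & is_cup (lower_chain L R P)].
Proof.
move=> [uP no_hull] LP RP LR range.
have between p a c a' c' : p \in P -> a \in P -> c \in P -> a' \in P -> c' \in P ->
    a.1 < p.1 < c.1 -> a'.1 < p.1 < c'.1 ->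
    0 <= orient a p c -> orient a' p c' <= 0 -> False.
  move=> pP aP cP a'P c'P apc a'pc' o o'.
  exact: no_hull p pP (in_conv_hull_between uP pP aP cP a'P c'P apc a'pc' o o').
have inside a (b : point) c :
    a \in P -> c \in P -> a.1 < b.1 -> b.1 < c.1 -> L.1 < b.1 < R.1.
  move=> aP cP ab bc; have /andP[La _] := range a aP; have /andP[_ cR] := range c cP.
  by rewrite (le_lt_trans La ab) (lt_le_trans bc cR).
split.
- rewrite /upper_chain /lower_chain !size_filter -count_predUI.
  rewrite (@eq_count _ (predU _ _) predT) ?count_predT ?leq_add2l; last first.
    by move=> x /=; rewrite le_total.
  rewrite -size_filter; apply: (@uniq_leq_size _ [:: L; R]); first by rewrite /= inE LR.
  by move=> x; rewrite !inE mem_filter => /orP[] /eqP ->;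
    rewrite /= ?orient_first ?orient_last lexx ?LP ?RP.
- move=> a b c; rewrite /upper_chain !mem_filter.
  move=> /andP[_ aP] /andP[oLbR bP] /andP[_ cP] ab bc.
  rewrite ltNge; apply/negP => o_abc.
  by apply: (between b a c L R) => //; rewrite ?ab ?bc ?(inside a b c).
- move=> a b c; rewrite /lower_chain !mem_filter.
  move=> /andP[_ aP] /andP[oLbR bP] /andP[_ cP] ab bc.
  rewrite ltNge; apply/negP => o_abc.
  by apply: (between b L R a c) => //; rewrite ?ab ?bc ?(inside a b c).
Qed.

Lemma seq_argmin (T : eqType) (f : T -> int) (s : seq T) :
  s != [::] -> exists2 m, m \in s & {in s, forall x, f m <= f x}.
Proof.
elim: s => // a s IH _; case: s IH => [|b s] IH.
  by exists a; rewrite ?mem_head // => x; rewrite inE => /eqP ->.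
have [m ms m_min] := IH isT.
case: (leP (f a) (f m)) => [am | ma].
  exists a; first exact: mem_head.
  by move=> x; rewrite inE => /orP[/eqP -> // | /m_min]; apply: le_trans.
exists m; first by rewrite inE ms orbT.
by move=> x; rewrite inE => /orP[/eqP -> | /m_min //]; apply: ltW.
Qed.

Theorem theorem3 (t : nat) (P : seq point) :
  (2 <= t)%N -> {subset P <= St t} -> convex_position P -> (size P <= t - 1)%N.
Proof.
move=> t_ge2 PS cP; have [uP _] := cP.
case: (leqP (size P) 1) => [|P_gt1]; first lia.
have P_nil : P != [::] by case: P P_gt1 {uP PS cP}.
have [L LP L_min] := seq_argmin (fun p : point => p.1) P_nil.
have [R RP R_max] := seq_argmin (fun p : point => - p.1) P_nil.
have range x : x \in P -> L.1 <= x.1 <= R.1.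
  move=> xP; apply/andP; split; first exact: (L_min x xP).
  by rewrite -lerN2; exact: (R_max x xP).
have LR : L != R.
  apply: contraTneq P_gt1 => eLR; rewrite -leqNgt.
  apply: size_le1_of_no_x_lt uP (sub_in2 PS (St_inj t_ge2)) _ => u v uP vP uv.
  move: (range u uP) (range v vP); rewrite -eLR => /andP[Lu _] /andP[_ vL].
  by have := lt_le_trans (le_lt_trans Lu uv) vL; rewrite ltxx.
have [sizeUD capU cupD] := convex_position_chains cP LP RP LR range.
have U_P : {subset upper_chain L R P <= P} := mem_subseq (filter_subseq _ _).
have D_P : {subset lower_chain L R P <= P} := mem_subseq (filter_subseq _ _).
have LU : L \in upper_chain L R P by rewrite mem_filter orient_first lexx LP.
have LD : L \in lower_chain L R P by rewrite mem_filter orient_first lexx LP.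
have RD : R \in lower_chain L R P by rewrite mem_filter orient_last lexx RP.
have U_le := St_cap_size t_ge2 (filter_uniq _ uP) (fun x xU => PS x (U_P x xU)) capU LU
  (PS R RP) (fun x xU => range x (U_P x xU)).
have D_le := St_cup_size t_ge2 (filter_uniq _ uP) (fun x xD => PS x (D_P x xD)) cupD LD RD
  (fun x xD => range x (D_P x xD)).
have [R_lt _] := blkP (PS R RP).
by have := leq_trans sizeUD (leq_add U_le D_le); lia.
Qed.
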